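(* Let $d_{\text{m}}\ge 1$, $1\le r\le d_{\text{m}}$, and $\boldsymbol{W}_{\text{qk},i}\in\mathbb{R}^{d_{\text{m}}\times d_{\text{m}}}$. Let $\boldsymbol{x}_{\text{q}}$ and $\boldsymbol{x}_{\text{kv}}$ be independent random row vectors in $\mathbb{R}^{d_{\text{m}}}$ with distributions $\mathbb{X}_\text{q}$, $\mathbb{X}_\text{kv}$ having finite second moments, such that the autocorrelation matrices $\boldsymbol{R}_{\mathbb{X}_\text{q}\mathbb{X}_\text{q}}:=\mathbb{E}\{\boldsymbol{x}_{\text{q}}^T\boldsymbol{x}_{\text{q}}\}$ and $\boldsymbol{R}_{\mathbb{X}_\text{kv}\mathbb{X}_\text{kv}}:=\mathbb{E}\{\boldsymbol{x}_{\text{kv}}^T\boldsymbol{x}_{\text{kv}}\}$ are positive definite, with unique symmetric square roots $\boldsymbol{R}_{\mathbb{X}_\text{q}\mathbb{X}_\text{q}}^{1/2}$, $\boldsymbol{R}_{\mathbb{X}_\text{kv}\mathbb{X}_\text{kv}}^{1/2}$. Consider the problem $$\operatorname{arg\,min}_{\widetilde{\boldsymbol{W}}_{\text{qk},i}}\ \mathbb{E}\left\{\left(\boldsymbol{x}_{\text{q}}(\boldsymbol{W}_{\text{qk},i}-\widetilde{\boldsymbol{W}}_{\text{qk},i})\boldsymbol{x}_{\text{kv}}^T\right)^2\right\}\quad\text{s.t.}\quad\operatorname{rank}(\widetilde{\boldsymbol{W}}_{\text{qk},i})=r.$$ Then an optimal solution is $$\widetilde{\boldsymbol{W}}_{\t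ext{qk},i}=\left(\boldsymbol{R}_{\mathbb{X}_\text{q}\mathbb{X}_\text{q}}^{1/2}\right)^{-1}\mathrm{SVD}_r\!\left(\boldsymbol{R}_{\mathbb{X}_\text{q}\mathbb{X}_\text{q}}^{1/2}\boldsymbol{W}_{\text{qk},i}\boldsymbol{R}_{\mathbb{X}_\text{kv}\mathbb{X}_\text{kv}}^{1/2}\right)\left(\boldsymbol{R}_{\mathbb{X}_\text{kv}\mathbb{X}_\text{kv}}^{1/2}\right)^{-1}.$$
   Context: $\mathrm{SVD}_r(\boldsymbol{M})$ denotes the truncated SVD: if $\boldsymbol{M}=\boldsymbol{U}\boldsymbol{\Sigma}\boldsymbol{V}^T$ is a singular value decomposition with singular values in decreasing order, then $\mathrm{SVD}_r(\boldsymbol{M})=\boldsymbol{U}_{:,:r}\boldsymbol{\Sigma}_{:r,:r}\boldsymbol{V}^T_{:r,:}$. Here $\boldsymbol{W}_{\text{qk},i}=\boldsymbol{W}_{\text{q},i}\boldsymbol{W}_{\text{k},i}^T$ is the fused query/key weight of attention head $i$, and the objective is the expected squared error of the pre-softmax attention score $\boldsymbol{x}_{\text{q}}\boldsymbol{W}_{\text{qk},i}\boldsymbol{x}_{\text{kv}}^T$. Vectors are row vectors. *)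

From HB Require Import structures.
From mathcomp Require Import all_boot all_order all_algebra.
From mathcomp Require Import all_classical all_reals all_analysis.
Set Implicit Arguments. Unset Strict Implicit. Unset Printing Implicit Defensive.
Import Order.TTheory GRing.Theory Num.Theory.
Local Open Scope classical_set_scope.
Local Open Scope ring_scope.

(* A random row vector in R^n on a probability space T is given by its
   n real coordinates X i : T -> R.  The row vector at outcome t: *)
Definition rvec {T : Type} {R : realType} {n : nat} (X : 'I_n -> T -> R) (t : T)
  : 'rV[R]_n := \row_i X i t.

Definition rvec_measurable {d} {T : measurableType d} {R : realType} {n : nat}
  (X : 'I_n -> T -> R) : Prop := forall i, measurable_fun setT (X i).

Definition finite_second_moments {d} {T : measurableType d} {R : realType}
  (P : probability T R) {n : nat} (X : 'I_n -> T -> R) : Prop :=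
  forall i, P.-integrable setT (fun t => ((X i t) ^+ 2)%:E).

(* Independence of two random vectors: the joint law on product rectangles
   (a pi-system generating the Borel sigma-algebra of R^n x R^n) factorises. *)
Definition indep_rvec {d} {T : measurableType d} {R : realType}
  (P : probability T R) {n : nat} (X Y : 'I_n -> T -> R) : Prop :=
  forall A B : 'I_n -> set R,
    (forall i, measurable (A i)) -> (forall j, measurable (B j)) ->
    P ((\bigcap_i (X i @^-1` A i)) `&` (\bigcap_j (Y j @^-1` B j)))
    = (P (\bigcap_i (X i @^-1` A i)) * P (\bigcap_j (Y j @^-1` B j)))%E.

Definition autocorr {d} {T : measurableType d} {R : realType}
  (P : probability T R) {n : nat} (X : 'I_n -> T -> R) : 'M[R]_n :=
  \matrix_(i, j) Rintegral P setT (fun t => X i t * X j t).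

Definition attn_err {d} {T : measurableType d} {R : realType}
  (P : probability T R) {n : nat} (Xq Xkv : 'I_n -> T -> R) (W Wt : 'M[R]_n) : R :=
  Rintegral P setT
    (fun t => ((rvec Xq t *m (W - Wt) *m (rvec Xkv t)^T) 0 0) ^+ 2).

Definition posdef {R : realType} {n : nat} (A : 'M[R]_n) : Prop :=
  A^T = A /\ forall v : 'rV[R]_n, v != 0 -> 0 < (v *m A *m v^T) 0 0.

Definition is_svd {R : realType} {n : nat} (M U V : 'M[R]_n) (s : 'rV[R]_n) : Prop :=
  [/\ U^T *m U = 1%:M, V^T *m V = 1%:M,
      (forall j, 0 <= s 0 j),
      (forall i j : 'I_n, (i <= j)%N -> s 0 j <= s 0 i)
    & M = U *m diag_mx s *m V^T].

(* SVD_r(M) = U_{:,:r} Sigma_{:r,:r} V^T_{:r,:} for the SVD (U, s, V). *)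
Definition svd_trunc {R : realType} {n r : nat} (H : (r <= n)%N)
  (U V : 'M[R]_n) (s : 'rV[R]_n) : 'M[R]_n :=
  colsub (widen_ord H) U *m diag_mx (\row_(j < r) s 0 (widen_ord H j))
    *m rowsub (widen_ord H) V^T.

From HB Require Import structures.
From mathcomp Require Import all_boot all_order all_algebra.
From mathcomp Require Import all_classical all_reals all_analysis.
From mathcomp Require Import measurable_realfun.
From mathcomp Require Import lra ring.
Import Order.TTheory GRing.Theory Num.Theory.
Local Open Scope classical_set_scope.
Local Open Scope ring_scope.

Set Implicit Arguments. Unset Strict Implicit. Unset Printing Implicit Defensive.

(* Independence turns the objective into a quadratic form in the error
   D = W - W': since E[x_i x_k y_j y_l] = E[x_i x_k] E[y_j y_l],
   E[(x_q D x_kv^T)^2] = tr(R_q D R_kv D^T) = ||R_q^(1/2) D R_kv^(1/2)||_F^2.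
   As W' |-> R_q^(1/2) W' R_kv^(1/2) is a rank-preserving bijection, the problem
   is the best rank-r Frobenius approximation of M = R_q^(1/2) W R_kv^(1/2),
   solved by the truncated SVD (Eckart-Young).  For a competitor B of rank <= r,
   let P be the orthogonal projection onto the row space of B; then
   ||M - B||^2 >= ||M (1 - P)||^2 = ||M||^2 - tr(M P M^T), and
   tr(M P M^T) = sum_j s_j^2 q_j with 0 <= q_j <= 1 and sum_j q_j <= r, which is
   at most the sum of the r largest s_j^2. *)

(* [pushforward mu F] is a measure only given [mF], so its instance cannot be
   inferred. *)
Definition image_measure d d' (T : measurableType d) (T' : measurableType d')
    (R : realType) (mu : {measure set T -> \bar R}) (F : T -> T')
    (mF : measurable_fun setT F) : {measure set T' -> \bar R} :=
  measure_function_pushforward__canonical__measure_function_Measure mu mF.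

Lemma measurable_fun_preimage d d' (T : measurableType d) (T' : measurableType d')
    (H : T -> T') (A : set T') :
  measurable_fun setT H -> measurable A -> measurable (H @^-1` A).
Proof. by move=> mH mA; rewrite -[_ @^-1` _]setTI; exact: mH. Qed.

Lemma Rintegral_sum d (T : measurableType d) (R : realType)
    (mu : {measure set T -> \bar R}) (D : set T) (I : Type) (s : seq I)
    (g : I -> T -> R) :
  measurable D -> (forall i, mu.-integrable D (EFin \o g i)) ->
  Rintegral mu D (fun x => \sum_(i <- s) g i x) = \sum_(i <- s) Rintegral mu D (g i).
Proof.
move=> mD ig; elim: s => [|a s IH].
  by rewrite big_nil /Rintegral; under eq_integral do rewrite big_nil; rewrite integral0.
rewrite big_cons -IH -RintegralD //; last first.
  apply: (eq_integrable mD (fun x => \sum_(i <- s) (g i x)%:E)).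
    by move=> x _; rewrite /= sumEFin.
  by apply: integrable_sum => // i _; exact: ig.
by apply: eq_Rintegral => x _; rewrite big_cons.
Qed.

Section independence_extension.
Local Open Scope ereal_scope.
Context d (T : measurableType d) (R : realType) (P : probability T R).

Lemma indep_event_pi_ext d1 (T1 : measurableType d1) (F : T -> T1) (E : set T)
    (C : set (set T1)) :
  measurable_fun setT F -> measurable E ->
  @measurable _ T1 = <<s C>> -> setI_closed C -> C setT ->
  (forall A, C A -> P (F @^-1` A `&` E) = P (F @^-1` A) * P E) ->
  forall A, measurable A -> P (F @^-1` A `&` E) = P (F @^-1` A) * P E.
Proof.
move=> mF mE genC CI CT indepC.
have PE0 : (0 <= fine (P E))%R := fine_ge0 (measure_ge0 _ _).
pose scaledE A := P (F @^-1` A) * P E.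
have scaledEE : scaledE = image_measure (mscale (NngNum PE0) P) mF.
  apply/funext => A; rewrite /scaledE muleC; congr (_ * _).
  exact/esym/fineK/fin_num_measure.
move=> A mA; rewrite -/(scaledE A) scaledEE.
apply: (measure_unique C (fun _ => setT) genC CI (fun _ => CT) _
  (image_measure (mrestr P mE) mF)) => //.
- by rewrite bigcup_const.
- by move=> B /indepC; rewrite -/(scaledE B) scaledEE.
- move=> _; rewrite /= /pushforward /mrestr preimage_setT setTI.
  by rewrite (le_lt_trans (probability_le1 _ mE)) ?ltry.
Qed.

Lemma indep_pi_ext d1 d2 (T1 : measurableType d1) (T2 : measurableType d2)
    (F : T -> T1) (G : T -> T2) (C1 : set (set T1)) (C2 : set (set T2)) :
  measurable_fun setT F -> measurable_fun setT G ->
  @measurable _ T1 = <<s C1>> -> setI_closed C1 -> C1 setT ->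
  @measurable _ T2 = <<s C2>> -> setI_closed C2 -> C2 setT ->
  (forall A B, C1 A -> C2 B ->
    P (F @^-1` A `&` G @^-1` B) = P (F @^-1` A) * P (G @^-1` B)) ->
  forall A B, measurable A -> measurable B ->
    P (F @^-1` A `&` G @^-1` B) = P (F @^-1` A) * P (G @^-1` B).
Proof.
move=> mF mG genC1 CI1 CT1 genC2 CI2 CT2 indepC.
have indep1 A B : measurable A -> C2 B ->
    P (F @^-1` A `&` G @^-1` B) = P (F @^-1` A) * P (G @^-1` B).
  move=> mA C2B; apply: (indep_event_pi_ext mF _ genC1 CI1 CT1) => //.
    by apply: measurable_fun_preimage mG _; rewrite genC2; exact: sub_sigma_algebra.
  by move=> A' C1A'; exact: indepC.
move=> A B mA mB; rewrite setIC [RHS]muleC.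
apply: (indep_event_pi_ext mG (measurable_fun_preimage mF mA) genC2 CI2 CT2)
  => // B' C2B'.
by rewrite setIC muleC indep1.
Qed.

End independence_extension.

Lemma measurable_rectangles d1 d2 (T1 : measurableType d1) (T2 : measurableType d2) :
  let C := [set A `*` B | A in @measurable _ T1 & B in @measurable _ T2] in
  [/\ @measurable _ (T1 * T2)%type = <<s C>>, setI_closed C & C setT].
Proof.
move=> C; split.
- exact: measurable_prod_measurableType.
- move=> _ _ [A1 mA1 [B1 mB1 <-]] [A2 mA2 [B2 mB2 <-]].
  rewrite -setXI; exists (A1 `&` A2); first exact: measurableI.
  by exists (B1 `&` B2) => //; exact: measurableI.
- by exists setT => //; exists setT => //; rewrite setXTT.
Qed.

Section expectation_of_product.
Local Open Scope ereal_scope.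
Context d (T : measurableType d) (R : realType) (P : probability T R).
Variables U V : {mfun T >-> R}.
Hypothesis indepUV : forall A B, measurable A -> measurable B ->
  P (U @^-1` A `&` V @^-1` B) = P (U @^-1` A) * P (V @^-1` B).

Let UV t := (U t, V t).
Let mUV : measurable_fun setT UV :=
  measurable_fun_pair (measurable_funP U) (measurable_funP V).
Local Notation law := (distribution P U \x distribution P V).

Let joint := image_measure P mUV.

Lemma product_law_integral (f : R * R -> \bar R) :
  \int[law]_z f z = \int[joint]_z f z.
Proof.
apply: eq_measure_integral => X mX _.
by apply: product_measure_unique => // A B mA mB; exact: indepUV.
Qed.

Lemma ge0_integral_product_law (f : R * R -> \bar R) :
  measurable_fun setT f -> (forall z, 0 <= f z) ->
  \int[law]_z f z = \int[P]_t f (U t, V t).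
Proof.
by move=> mf f0; rewrite product_law_integral ge0_integral_pushforward ?preimage_setT.
Qed.

Let integral_abs_fin (X : {mfun T >-> R}) : P.-integrable setT (EFin \o X) ->
  \int[P]_t (`|X t|)%:E < +oo.
Proof. by case/integrableP => _; under eq_integral do rewrite abse_EFin. Qed.

Lemma integral_abs_mul_indep :
  \int[P]_t (`|U t| * `|V t|)%:E = \int[P]_t (`|U t|)%:E * \int[P]_t (`|V t|)%:E.
Proof.
have mprod : measurable_fun setT (fun z : R * R => (`|z.1| * `|z.2|)%:E).
  by apply/measurable_EFinP; apply: measurable_funM;
    apply: measurableT_comp; [exact: normr_measurable|exact: measurable_fst|
                              exact: normr_measurable|exact: measurable_snd].
rewrite -(ge0_integral_product_law (f := fun z => (`|z.1| * `|z.2|)%:E)) //.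
rewrite fubini_tonelli1 // /fubini_F /=.
have mabs : measurable_fun setT (fun x : R => (`|x|)%:E).
  by apply/measurable_EFinP; exact: normr_measurable.
have inner (x : R) : \int[distribution P V]_y (`|x| * `|y|)%:E =
    `|x|%:E * \int[distribution P V]_y `|y|%:E.
  by under eq_integral do rewrite EFinM; exact: ge0_integralZl_EFin.
under eq_integral do rewrite inner.
rewrite ge0_integralZr //; last exact: integral_ge0.
by rewrite !ge0_integral_distribution.
Qed.

Hypotheses (iU : P.-integrable setT (EFin \o U)) (iV : P.-integrable setT (EFin \o V)).

Lemma integrable_mul_indep : P.-integrable setT (fun t => (U t * V t)%:E).
Proof.
apply/integrableP; split; first by apply/measurable_EFinP; exact: measurable_funM.
under eq_integral do rewrite abse_EFin normrM.
rewrite integral_abs_mul_indep lte_mul_pinfty //; first exact: integral_ge0.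
- by rewrite ge0_fin_numE ?integral_abs_fin //; exact: integral_ge0.
- exact: integral_abs_fin.
Qed.

Lemma integral_mul_indep :
  \int[P]_t (U t * V t)%:E = \int[P]_t (U t)%:E * \int[P]_t (V t)%:E.
Proof.
have mid : measurable_fun setT (fun x : R => x%:E) by exact/measurable_EFinP.
have mmul : measurable_fun setT (fun z : R * R => (z.1 * z.2)%:E).
  by apply/measurable_EFinP; exact: measurable_funM.
have int_law (X : {mfun T >-> R}) : P.-integrable setT (EFin \o X) ->
    (distribution P X).-integrable setT (fun x => x%:E).
  by move=> iX; apply: integrable_pushforward; rewrite ?preimage_setT.
have int_prod : law.-integrable setT (fun z => (z.1 * z.2)%:E).
  apply/integrableP; split => //.
  rewrite ge0_integral_product_law //; last exact: measurableT_comp.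
  by case/integrableP: integrable_mul_indep.
have -> : \int[P]_t (U t * V t)%:E = \int[joint]_z (z.1 * z.2)%:E.
  change (\int[P]_t (U t * V t)%:E = \int[pushforward P UV]_z (z.1 * z.2)%:E).
  by rewrite integral_pushforward ?preimage_setT //; exact: integrable_mul_indep.
rewrite -product_law_integral -(integral12_prod_meas1 int_prod) /fubini_F /=.
have inner (x : R) : \int[distribution P V]_y (x * y)%:E = x%:E * \int[P]_t (V t)%:E.
  under eq_integral do rewrite EFinM.
  by rewrite integralZl ?integral_distribution //; exact: int_law.
under eq_integral do rewrite inner.
rewrite -(fineK (integrable_fin_num measurableT iV)) integralZr //; last exact: int_law.
by rewrite integral_distribution.
Qed.

End expectation_of_product.

Section random_row_vectors.
Local Open Scope ereal_scope.
Context d (T : measurableType d) (R : realType) (P : probability T R) (n : nat).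
Variables Xq Xkv : 'I_n -> T -> R.
Hypotheses (mXq : rvec_measurable Xq) (mXkv : rvec_measurable Xkv).
Hypothesis indep : indep_rvec P Xq Xkv.
Hypotheses (m2q : finite_second_moments P Xq) (m2kv : finite_second_moments P Xkv).

Lemma indep_rvec_coord_pairs (i k j l : 'I_n) (A B : set (R * R)) :
  measurable A -> measurable B ->
  let F t := (Xq i t, Xq k t) in let G t := (Xkv j t, Xkv l t) in
  P (F @^-1` A `&` G @^-1` B) = P (F @^-1` A) * P (G @^-1` B).
Proof.
move=> mA mB F G; have [genC CI CT] := measurable_rectangles R R.
apply: (indep_pi_ext (measurable_fun_pair (mXq i) (mXq k))
  (measurable_fun_pair (mXkv j) (mXkv l)) genC CI CT genC CI CT) => //.
move=> _ _ [A1 mA1 [A2 mA2 <-]] [B1 mB1 [B2 mB2 <-]].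
have coordE (X : 'I_n -> T -> R) (a b : 'I_n) (S1 S2 : set R) :
    (fun t => (X a t, X b t)) @^-1` (S1 `*` S2) =
    \bigcap_m (X m @^-1` ((if m == a then S1 else setT) `&`
                          (if m == b then S2 else setT))).
  apply/seteqP; split => t /=.
    by move=> [h1 h2] m _ /=; split; case: eqP => // ->.
  by move=> h; split; [have := h a I|have := h b I]; rewrite /= eqxx => -[].
by rewrite /F /G !coordE; apply: indep => m; apply: measurableI; case: eqP.
Qed.

Lemma integrable_coord_mul (X : 'I_n -> T -> R) (i k : 'I_n) :
  rvec_measurable X -> finite_second_moments P X ->
  P.-integrable setT (EFin \o (fun t => X i t * X k t)%R).
Proof.
move=> mX m2.
apply: (le_integrable measurableT (g := fun t => (X i t ^+ 2 + X k t ^+ 2)%R%:E)).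
- by apply/measurable_EFinP; exact: measurable_funM.
- move=> t _; rewrite /comp !abse_EFin lee_fin [X in (_ <= X)%R]ger0_norm.
    by rewrite ler_norml; apply/andP; split; nra.
  by rewrite addr_ge0 ?sqr_ge0.
- under eq_fun do rewrite EFinD; exact: integrableD.
Qed.

Let coord_mul (X : 'I_n -> T -> R) (mX : rvec_measurable X) (a b : 'I_n)
    : {mfun T >-> R} :=
  HB.pack (fun t => X a t * X b t)%R
    (isMeasurableFun.Build _ _ _ _ _ (measurable_funM (mX a) (mX b))).

Let indep_coord_mul (i k j l : 'I_n) (A B : set R) :
  measurable A -> measurable B ->
  let U := coord_mul mXq i k in let V := coord_mul mXkv j l in
  P (U @^-1` A `&` V @^-1` B) = P (U @^-1` A) * P (V @^-1` B).
Proof.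
have mmul : measurable_fun setT (fun z : R * R => z.1 * z.2)%R.
  exact: (measurable_funM measurable_fst measurable_snd).
move=> mA mB; exact: (indep_rvec_coord_pairs i k j l
  (measurable_fun_preimage mmul mA) (measurable_fun_preimage mmul mB)).
Qed.

Lemma integrable_coord4 (i k j l : 'I_n) :
  P.-integrable setT (EFin \o (fun t => Xq i t * Xq k t * (Xkv j t * Xkv l t))%R).
Proof.
exact: (integrable_mul_indep (indep_coord_mul i k j l)
  (integrable_coord_mul i k mXq m2q) (integrable_coord_mul j l mXkv m2kv)).
Qed.

Lemma Rintegral_coord4 (i k j l : 'I_n) :
  Rintegral P setT (fun t => Xq i t * Xq k t * (Xkv j t * Xkv l t))%R =
  (autocorr P Xq i k * autocorr P Xkv j l)%R.
Proof.
have iq := integrable_coord_mul i k mXq m2q.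
have ikv := integrable_coord_mul j l mXkv m2kv.
rewrite /Rintegral (integral_mul_indep (indep_coord_mul i k j l) iq ikv) fineM //.
- by rewrite !mxE.
- exact: integrable_fin_num iq.
- exact: integrable_fin_num ikv.
Qed.

End random_row_vectors.

Section quadruple_sums.
Variables (R : comPzRingType) (n : nat).
Local Notation quad := (('I_n * 'I_n) * ('I_n * 'I_n))%type.

Lemma bilinear_sqrE (x y : 'rV[R]_n) (D : 'M[R]_n) :
  ((x *m D *m y^T) 0 0) ^+ 2 =
  \sum_(p : quad) D p.1.1 p.1.2 * D p.2.1 p.2.2 *
                  (x 0 p.1.1 * x 0 p.2.1 * (y 0 p.1.2 * y 0 p.2.2)).
Proof.
have bilinE : (x *m D *m y^T) 0 0 = \sum_(p : 'I_n * 'I_n) x 0 p.1 * D p.1 p.2 * y 0 p.2.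
  rewrite -(pair_bigA _ (fun i j => x 0 i * D i j * y 0 j)) mxE exchange_big /=.
  by apply: eq_bigr => j _; rewrite !mxE big_distrl.
rewrite expr2 bilinE big_distrl /=.
under eq_bigr do rewrite big_distrr /=.
by rewrite pair_bigA; apply: eq_bigr => -[[i j] [k l]] _ /=; ring.
Qed.

Lemma mxtrace_sandwichE (A B D : 'M[R]_n) :
  \tr (A *m D *m B *m D^T) =
  \sum_(p : quad) D p.1.1 p.1.2 * D p.2.1 p.2.2 * (A p.1.1 p.2.1 * B p.2.2 p.1.2).
Proof.
rewrite -(pair_bigA _ (fun p q => D p.1 p.2 * D q.1 q.2 * (A p.1 q.1 * B q.2 p.2))).
rewrite -(pair_bigA _ (fun i j => \sum_q D i j * D q.1 q.2 * (A i q.1 * B q.2 j))).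
apply: eq_bigr => i _; rewrite mxE; apply: eq_bigr => j _.
rewrite -(pair_bigA _ (fun k l => D i j * D k l * (A i k * B l j))) !mxE big_distrl.
under eq_bigr => l _ do rewrite mxE !big_distrl.
by rewrite exchange_big /=; apply: eq_bigr => k _; apply: eq_bigr => l _ /=; ring.
Qed.

End quadruple_sums.

Lemma autocorrC d (T : measurableType d) (R : realType) (P : probability T R) n
    (X : 'I_n -> T -> R) (i j : 'I_n) :
  autocorr P X i j = autocorr P X j i.
Proof. by rewrite !mxE; apply: eq_Rintegral => t _; rewrite mulrC. Qed.

Section attention_error.
Context d (T : measurableType d) (R : realType) (P : probability T R) (n : nat).
Variables Xq Xkv : 'I_n -> T -> R.
Hypotheses (mXq : rvec_measurable Xq) (mXkv : rvec_measurable Xkv).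
Hypothesis indep : indep_rvec P Xq Xkv.
Hypotheses (m2q : finite_second_moments P Xq) (m2kv : finite_second_moments P Xkv).

Lemma attn_errE (W Z : 'M[R]_n) :
  attn_err P Xq Xkv W Z =
  \tr (autocorr P Xq *m (W - Z) *m autocorr P Xkv *m (W - Z)^T).
Proof.
rewrite mxtrace_sandwichE /attn_err.
under eq_Rintegral do rewrite bilinear_sqrE.
have rvecE (X : 'I_n -> T -> R) t i : rvec X t 0 i = X i t by rewrite mxE.
under eq_Rintegral do under eq_bigr do rewrite !rvecE.
rewrite Rintegral_sum //; last first.
  move=> p; apply: (eq_integrable measurableT
    (fun t => (_%:E * (Xq p.1.1 t * Xq p.2.1 t * (Xkv p.1.2 t * Xkv p.2.2 t))%:E)%E)).
    by move=> t _; rewrite /= EFinM.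
  exact/integrableZl/integrable_coord4.
apply: eq_bigr => -[[i j] [k l]] _ /=.
rewrite RintegralZl ?Rintegral_coord4 ?(autocorrC P Xkv l) //.
exact: integrable_coord4.
Qed.

End attention_error.

Section frobenius.
Variable R : realFieldType.

Definition sqfrob m n (A : 'M[R]_(m, n)) : R := \tr (A *m A^T).

Lemma sqfrobE m n (A : 'M[R]_(m, n)) : sqfrob A = \sum_i \sum_j A i j ^+ 2.
Proof.
by apply: eq_bigr => i _; rewrite mxE; apply: eq_bigr => j _; rewrite mxE expr2.
Qed.

Lemma sqfrob_ge0 m n (A : 'M[R]_(m, n)) : 0 <= sqfrob A.
Proof.
by rewrite sqfrobE sumr_ge0 // => i _; rewrite sumr_ge0 // => j _; rewrite sqr_ge0.
Qed.

Lemma sqfrob_eq0 m n (A : 'M[R]_(m, n)) : sqfrob A = 0 -> A = 0.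
Proof.
have sq0 i j : 0 <= A i j ^+ 2 by exact: sqr_ge0.
have row0 i : 0 <= \sum_j A i j ^+ 2 by exact: sumr_ge0.
rewrite sqfrobE => A0; apply/matrixP => i j; rewrite mxE.
have rowi0 := psumr_eq0P (fun i _ => row0 i) A0 (i := i) isT.
by apply/eqP; rewrite -sqrf_eq0 (psumr_eq0P (fun j _ => sq0 i j) rowi0 (i := j)).
Qed.

Lemma sqfrobD_orthogonal m n (X Y : 'M[R]_(m, n)) :
  X *m Y^T = 0 -> sqfrob (X + Y) = sqfrob X + sqfrob Y.
Proof.
move=> XY0; have YX0 : Y *m X^T = 0 by rewrite -[Y]trmxK -trmx_mul XY0 trmx0.
by rewrite /sqfrob linearD /= mulmxDl !mulmxDr XY0 YX0 !mxtraceD mxtrace0 addr0 add0r.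
Qed.

Lemma sqfrob_orthogonal m n (U : 'M[R]_m) (V : 'M[R]_n) (A : 'M[R]_(m, n)) :
  U^T *m U = 1%:M -> V^T *m V = 1%:M -> sqfrob (U *m A *m V^T) = sqfrob A.
Proof.
move=> hU hV; rewrite /sqfrob !trmx_mul trmxK -!mulmxA (mulmxA V^T) hV mul1mx.
by rewrite mxtrace_mulC -!mulmxA hU mulmx1.
Qed.

Lemma sqfrob_diag n (t : 'rV[R]_n) : sqfrob (diag_mx t) = \sum_j t 0 j ^+ 2.
Proof.
rewrite /sqfrob tr_diag_mx; apply: eq_bigr => j _.
by rewrite mul_mx_diag !mxE eqxx mulr1n expr2.
Qed.

Lemma mxtrace_diag_conj n (t : 'rV[R]_n) (Q : 'M[R]_n) :
  \tr (diag_mx t *m Q *m diag_mx t) = \sum_j t 0 j ^+ 2 * Q j j.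
Proof.
by apply: eq_bigr => j _; rewrite mul_mx_diag mxE mul_diag_mx mxE mulrAC -expr2.
Qed.

Lemma mxtrace_sqr_conj n (S1 S2 D : 'M[R]_n) : S1^T = S1 -> S2^T = S2 ->
  \tr (S1 *m S1 *m D *m (S2 *m S2) *m D^T) = sqfrob (S1 *m D *m S2).
Proof.
move=> S1T S2T; rewrite /sqfrob !trmx_mul S1T S2T !mulmxA.
by rewrite [RHS]mxtrace_mulC !mulmxA.
Qed.

End frobenius.

Section orthogonal_projection.
Variable R : realFieldType.

Lemma row_free_gram_unit k n (A : 'M[R]_(k, n)) : row_free A -> A *m A^T \in unitmx.
Proof.
move=> freeA; rewrite -row_free_unit; apply/inj_row_free => v vAA0.
have vA0 : sqfrob (v *m A) = 0.
  by rewrite /sqfrob trmx_mul !mulmxA -(mulmxA v) vAA0 !mul0mx mxtrace0.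
by apply: (row_free_inj freeA); rewrite mul0mx; exact: sqfrob_eq0.
Qed.

Lemma row_free_proj k n (A : 'M[R]_(k, n)) : row_free A -> exists Pm : 'M[R]_n,
  [/\ Pm^T = Pm, Pm *m Pm = Pm, \tr Pm = k%:R & A *m Pm = A].
Proof.
move=> /row_free_gram_unit GA.
have APm : A *m (A^T *m (invmx (A *m A^T) *m A)) = A.
  by rewrite !mulmxA mulmxV // mul1mx.
exists (A^T *m (invmx (A *m A^T) *m A)); split => //.
- by rewrite !trmx_mul trmxK trmx_inv trmx_mul trmxK mulmxA.
- by rewrite -!mulmxA APm.
- by rewrite mxtrace_mulC -mulmxA mulVmx // mxtrace1.
Qed.

Lemma row_space_proj n (B : 'M[R]_n) : exists Pm : 'M[R]_n,
  [/\ Pm^T = Pm, Pm *m Pm = Pm, \tr Pm = (\rank B)%:R & B *m Pm = B].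
Proof.
have [Pm [PT PP Ptr basePm]] := row_free_proj (row_base_free B).
exists Pm; split => //.
have /submxP[D ->] : (B <= row_base B)%MS by rewrite eq_row_base.
by rewrite -mulmxA basePm.
Qed.

Lemma sym_idempotent_diag_bound n (Q : 'M[R]_n) :
  Q^T = Q -> Q *m Q = Q -> forall j, 0 <= Q j j <= 1.
Proof.
move=> QT QQ j.
have QjjE : Q j j = \sum_l Q j l ^+ 2.
  rewrite -{1}QQ mxE; apply: eq_bigr => l _.
  by rewrite expr2 -[in Q l j]QT mxE.
have Qjj_ge0 : 0 <= Q j j by rewrite QjjE sumr_ge0 // => l _; exact: sqr_ge0.
have : Q j j ^+ 2 <= Q j j.
  by rewrite [leRHS]QjjE (bigD1 j) //= lerDl sumr_ge0 // => l _; exact: sqr_ge0.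
by rewrite Qjj_ge0 /=; nra.
Qed.

End orthogonal_projection.

Section top_weights.
Variable R : realFieldType.

Lemma sum_ord_lt n r : (r <= n)%N -> \sum_(j < n) ((j : nat) < r)%:R = r%:R :> R.
Proof.
move=> rn; have -> : r%:R = \sum_(j < r) 1 :> R by rewrite sumr_const card_ord.
rewrite (big_ord_widen n (fun=> 1) rn) [RHS]big_mkcond.
by apply: eq_bigr => j _; case: ifP.
Qed.

Lemma sum_weighted_le_top n r (a q : 'I_n -> R) : (r <= n)%N ->
  (forall i j : 'I_n, (i <= j)%N -> a j <= a i) -> (forall j, 0 <= a j) ->
  (forall j, 0 <= q j <= 1) -> \sum_j q j <= r%:R ->
  \sum_j a j * q j <= \sum_(j < n) ((j : nat) < r)%:R * a j.
Proof.
move=> rn a_dec a_ge0 q01 sumq.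
(* [c] separates the [r] largest weights [a j] from the others. *)
have [c [c_ge0 c_split]] : exists c, 0 <= c /\ forall j : 'I_n,
    if (j < r)%N then c <= a j else a j <= c.
  case: (ltnP r n) => [rn'|nr].
    exists (a (Ordinal rn')); split => // j; case: ltnP => jr; apply: a_dec => //.
    exact: ltnW.
  by exists 0; split => // j; rewrite (leq_trans (ltn_ord j) nr).
have termwise j : a j * q j - ((j : nat) < r)%:R * a j <= c * (q j - ((j : nat) < r)%:R).
  have := c_split j; have /andP[q0 q1] := q01 j.
  by case: (j < r)%N => /=; rewrite ?mul1r ?mul0r ?subr0; nra.
have : \sum_j (a j * q j - ((j : nat) < r)%:R * a j) <=
       \sum_j c * (q j - ((j : nat) < r)%:R).
  by apply: ler_sum => j _; exact: termwise.
rewrite !sumrB -mulr_sumr sumrB sum_ord_lt //.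
have : c * (\sum_j q j - r%:R) <= 0 by rewrite mulr_ge0_le0 // subr_le0.
lra.
Qed.

End top_weights.

Lemma pid_mul_diag (R : pzRingType) n k (t : 'rV[R]_n) :
  pid_mx k *m diag_mx t = diag_mx (\row_j (((j : nat) < k)%:R * t 0 j)).
Proof.
apply/matrixP => a b; rewrite mul_mx_diag !mxE.
case: (eqVneq a b) => [->|/negbTE ab]; first by rewrite eqxx.
by rewrite mulr0n (_ : (a == b :> nat) = false) ?mul0r.
Qed.

Lemma svd_truncE (R : realType) n r (rn : (r <= n)%N) (U V : 'M[R]_n) (s : 'rV[R]_n) :
  svd_trunc rn U V s = U *m (pid_mx r *m diag_mx s) *m V^T.
Proof.
apply/matrixP => a b; rewrite pid_mul_diag /svd_trunc !mul_mx_diag !mxE.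
rewrite [RHS](bigID (fun j : 'I_n => (j < r)%N)) /= [X in _ = _ + X]big1 ?addr0.
  rewrite (big_ord_narrow rn); apply: eq_bigr => j _.
  by rewrite !mxE /= ltn_ord mul1r.
by move=> j /negbTE jr; rewrite !mxE jr mul0r mulr0 mul0r.
Qed.

Section eckart_young.
Variable R : realType.
Variables (n : nat) (M U V : 'M[R]_n) (s : 'rV[R]_n).
Hypothesis svdM : is_svd M U V s.

Lemma sqfrob_svd : sqfrob M = \sum_j s 0 j ^+ 2.
Proof. by case: svdM => hU hV _ _ ->; rewrite sqfrob_orthogonal // sqfrob_diag. Qed.

Lemma mxtrace_proj_svd_le r (Pm : 'M[R]_n) : (r <= n)%N ->
  Pm^T = Pm -> Pm *m Pm = Pm -> \tr Pm <= r%:R ->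
  \tr (M *m Pm *m M^T) <= \sum_(j < n) ((j : nat) < r)%:R * s 0 j ^+ 2.
Proof.
case: svdM => hU hV s_ge0 s_dec -> rn PT PP trP.
(* [Q] is again an orthogonal projection, with the trace of [Pm]. *)
pose Q := V^T *m Pm *m V.
have VVT : V *m V^T = 1%:M := mulmx1C hV.
have trE : \tr (U *m diag_mx s *m V^T *m Pm *m (U *m diag_mx s *m V^T)^T) =
    \sum_j s 0 j ^+ 2 * Q j j.
  rewrite -mxtrace_diag_conj !trmx_mul trmxK tr_diag_mx !mulmxA mxtrace_mulC.
  by rewrite !mulmxA hU mul1mx.
have QT : Q^T = Q by rewrite /Q !trmx_mul trmxK PT mulmxA.
have QQ : Q *m Q = Q.
  by rewrite /Q -!mulmxA (mulmxA V) VVT mul1mx (mulmxA Pm) PP !mulmxA.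
have trQ : \sum_j Q j j <= r%:R.
  by rewrite -[\sum_j _]/(\tr Q) /Q mxtrace_mulC mulmxA VVT mul1mx.
rewrite trE; apply: sum_weighted_le_top => // [i j ij|j|].
- by have := s_dec i j ij; have := s_ge0 j; nra.
- exact: sqr_ge0.
- exact: sym_idempotent_diag_bound.
Qed.

Lemma sqfrob_sub_svd_trunc r (rn : (r <= n)%N) :
  sqfrob (M - svd_trunc rn U V s) =
  \sum_j s 0 j ^+ 2 - \sum_(j < n) ((j : nat) < r)%:R * s 0 j ^+ 2.
Proof.
case: svdM => hU hV _ _ ->; rewrite svd_truncE -mulmxBl -mulmxBr pid_mul_diag -linearB /=.
rewrite sqfrob_orthogonal // sqfrob_diag -sumrB; apply: eq_bigr => j _.
by rewrite !mxE; case: (j < r)%N => /=; ring.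
Qed.

Theorem eckart_young r (rn : (r <= n)%N) (B : 'M[R]_n) : (\rank B <= r)%N ->
  sqfrob (M - svd_trunc rn U V s) <= sqfrob (M - B).
Proof.
move=> rankB; have [Pm [PT PP trP BP]] := row_space_proj B.
(* Pythagoras along the projection [Pm] onto the row space of [B]. *)
have XY0 : M *m (1%:M - Pm) *m ((M - B) *m Pm)^T = 0.
  by rewrite trmx_mul PT -!mulmxA (mulmxA _ Pm) mulmxBl mul1mx PP subrr mul0mx mulmx0.
have MBE : M - B = M *m (1%:M - Pm) + (M - B) *m Pm.
  by rewrite mulmxBr mulmx1 mulmxBl BP addrA subrK.
have sqfrob_compl : sqfrob (M *m (1%:M - Pm)) = sqfrob M - \tr (M *m Pm *m M^T).
  have idc : (1%:M - Pm) *m (1%:M - Pm)^T = 1%:M - Pm.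
    by rewrite [(_ - _)^T]raddfB /= trmx1 PT mulmxBl mul1mx mulmxBr mulmx1 PP subrr subr0.
  rewrite /sqfrob trmx_mul mulmxA -[M *m _ *m (_ - _)^T]mulmxA idc.
  by rewrite mulmxBr mulmx1 mulmxBl linearB.
have := mxtrace_proj_svd_le rn PT PP; rewrite trP ler_nat => /(_ rankB).
rewrite MBE (sqfrobD_orthogonal XY0) sqfrob_compl sqfrob_sub_svd_trunc sqfrob_svd.
by have := sqfrob_ge0 ((M - B) *m Pm); lra.
Qed.

End eckart_young.

Section ranks.
Variable R : fieldType.

Lemma mxrank_mul_unit n (A X B : 'M[R]_n) : A \in unitmx -> B \in unitmx ->
  \rank (A *m X *m B) = \rank X.
Proof.
move=> uA uB; rewrite mxrankMfree ?row_free_unit //.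
by rewrite (eqmxMfull X (_ : row_full A)) // row_full_unit.
Qed.

Lemma mxrank_orthogonal_conj n (U V X : 'M[R]_n) :
  U^T *m U = 1%:M -> V^T *m V = 1%:M -> \rank (U *m X *m V^T) = \rank X.
Proof.
by move=> /mulmx1_unit[_ uU] /mulmx1_unit[uVT _]; exact: mxrank_mul_unit.
Qed.

Lemma mxrank_pid_diag_le n k (t : 'rV[R]_n) : (k <= n)%N ->
  (\rank ((pid_mx k : 'M[R]_n) *m diag_mx t) <= k)%N.
Proof. by move=> kn; rewrite (leq_trans (mxrankM_maxl _ _)) ?rank_pid_mx. Qed.

Lemma mxrank_pid_diag n k (t : 'rV[R]_n) : (k <= n)%N ->
  (forall j : 'I_n, (j < k)%N -> t 0 j != 0) ->
  \rank ((pid_mx k : 'M[R]_n) *m diag_mx t) = k.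
Proof.
(* [pid_mx k] ignores the entries of [t] past [k]: replace them by [1]. *)
move=> kn t_neq0; pose t1 := \row_j (if (j < k)%N then t 0 j else 1).
have -> : (pid_mx k : 'M[R]_n) *m diag_mx t = pid_mx k *m diag_mx t1.
  rewrite !pid_mul_diag; congr diag_mx; apply/rowP => j; rewrite !mxE.
  by case: ifP => //= _; rewrite !mul0r.
rewrite mxrankMfree ?rank_pid_mx // row_free_unit unitmxE det_diag unitfE.
by apply/prodf_neq0 => j _; rewrite mxE; case: ifPn => [/t_neq0|_]; rewrite ?oner_eq0.
Qed.

End ranks.

Lemma posdef_unitmx (R : realType) n (S : 'M[R]_n) : posdef S -> S \in unitmx.
Proof.
case=> _ Spos; rewrite -row_free_unit; apply/inj_row_free => v vS0.
by apply/eqP/negPn/negP => /Spos; rewrite vS0 mul0mx mxE ltxx.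
Qed.

Lemma svd_sval_neq0 (R : realType) n (M U V : 'M[R]_n) (s : 'rV[R]_n) (j : 'I_n) :
  is_svd M U V s -> (j < \rank M)%N -> s 0 j != 0.
Proof.
case=> hU hV s_ge0 s_dec ->; apply: contraTneq => sj0.
have tail0 (i : 'I_n) : (j <= i)%N -> s 0 i = 0.
  by move=> ji; apply/eqP; rewrite eq_le s_ge0 andbT -sj0 s_dec.
have -> : diag_mx s = (pid_mx j : 'M[R]_n) *m diag_mx s.
  rewrite pid_mul_diag; congr diag_mx; apply/rowP => i; rewrite mxE.
  by case: ltnP => [_|/tail0 ->]; rewrite ?mul1r ?mulr0.
by rewrite mxrank_orthogonal_conj // -leqNgt mxrank_pid_diag_le // ltnW.
Qed.

Unset Implicit Arguments.

Theorem theorem2 (R : realType) (d : measure_display) (T : measurableType d)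
  (P : probability T R) (n r : nat) (hn : (1 <= n)%N) (hr1 : (1 <= r)%N)
  (hrn : (r <= n)%N) (W : 'M[R]_n) (Xq Xkv : 'I_n -> T -> R)
  (mXq : rvec_measurable Xq) (mXkv : rvec_measurable Xkv)
  (indep : indep_rvec P Xq Xkv)
  (m2q : finite_second_moments P Xq) (m2kv : finite_second_moments P Xkv)
  (pdq : posdef (autocorr P Xq)) (pdkv : posdef (autocorr P Xkv))
  (Sq Skv : 'M[R]_n)
  (hSq : posdef Sq) (hSq2 : Sq *m Sq = autocorr P Xq)
  (hSkv : posdef Skv) (hSkv2 : Skv *m Skv = autocorr P Xkv)
  (U V : 'M[R]_n) (s : 'rV[R]_n) (hsvd : is_svd (Sq *m W *m Skv) U V s) :
  let Wt := invmx Sq *m svd_trunc hrn U V s *m invmx Skv in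
  [/\ (\rank Wt <= r)%N,
      ((r <= \rank W)%N -> \rank Wt = r)
    & forall W' : 'M[R]_n, \rank W' = r ->
        attn_err P Xq Xkv W Wt <= attn_err P Xq Xkv W W'].
Proof.
move=> Wt; have uq := posdef_unitmx hSq; have ukv := posdef_unitmx hSkv.
have [hU hV _ _ _] := hsvd.
have rankWt : \rank Wt = \rank ((pid_mx r : 'M[R]_n) *m diag_mx s).
  by rewrite mxrank_mul_unit ?unitmx_inv // svd_truncE mxrank_orthogonal_conj.
have errE Z : attn_err P Xq Xkv W Z = sqfrob (Sq *m W *m Skv - Sq *m Z *m Skv).
  rewrite (attn_errE mXq mXkv indep m2q m2kv) -hSq2 -hSkv2.
  by rewrite mxtrace_sqr_conj ?hSq.1 ?hSkv.1 // mulmxBr mulmxBl.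
split.
- by rewrite rankWt mxrank_pid_diag_le.
- move=> rW; rewrite rankWt mxrank_pid_diag // => j jr.
  by apply: (svd_sval_neq0 hsvd); rewrite mxrank_mul_unit // (leq_trans jr rW).
- move=> W' rW'; rewrite !errE.
  have -> : Sq *m Wt *m Skv = svd_trunc hrn U V s.
    by rewrite !mulmxA mulmxV // mul1mx -mulmxA mulVmx // mulmx1.
  by apply: (eckart_young hsvd); rewrite mxrank_mul_unit // rW'.
Qed.
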